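(* Let $S\subseteq\mathbb{R}^n$ be a closed set, $\bar x\in S$ and $d\in T_S(\bar x)$. Then $$T_S^2(\bar x;d)+\hat T_S(\bar x;d)=T_S^2(\bar x;d)\quad\text{and}\quad T_S^{''}(\bar x;d)+\hat T_S(\bar x;d)=T_S^{''}(\bar x;d).$$
   Context: $T_S(\bar x)=\{d\mid \exists t_k\downarrow 0,\ d_k\to d,\ \bar x+t_kd_k\in S\}$ is the tangent cone. $T_S^2(\bar x;d):=\{w\mid \exists t_k\downarrow 0,\ w_k\to w,\ \bar x+t_kd+\tfrac12 t_k^2w_k\in S\}$ (outer second-order tangent set); $T_S^{''}(\bar x;d):=\{w\mid \exists (t_k,r_k)\downarrow(0,0),\ w_k\to w,\ t_k/r_k\to0,\ \bar x+t_kd+\tfrac12 t_kr_kw_k\in S\}$ (asymptotic second-order tangent cone). The directional regular (Clarke) tangent cone is the Painlevé–Kuratowski lower limit $\hat T_S(\bar x;d):=\liminf_{t\downarrow 0,\,d'\to d,\,\bar x+td'\in S}T_S(\bar x+td')$, i.e. the set of $v$ such that for every sequence $t_k\downarrow0$, $d'_k\to d$ with $\bar x+t_kd'_k\in S$ there exist $v_k\to v$ with $v_k\in T_S(\bar x+t_kd'_k)$ for all large $k$. *)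

From HB Require Import structures.
From mathcomp Require Import all_boot all_order all_algebra.
From mathcomp Require Import all_classical all_reals all_analysis.
Set Implicit Arguments. Unset Strict Implicit. Unset Printing Implicit Defensive.
Import Order.TTheory GRing.Theory Num.Theory.
Import numFieldNormedType.Exports.
Local Open Scope classical_set_scope.
Local Open Scope ring_scope.

Section Cones.
Context {R : realType} {n : nat}.
Notation V := 'rV[R]_n.

(* t_k "decreases to 0": positive terms converging to 0 *)
Definition down0 (t : nat -> R) : Prop := (forall k, 0 < t k) /\ t @ \oo --> 0.

Definition setsum_mk (A B : set V) : set V :=
  [set z | exists a b, A a /\ B b /\ z = a + b].

Definition tcone (S : set V) (x : V) : set V :=
  [set d | exists (t : nat -> R) (dk : nat -> V),
     down0 t /\ dk @ \oo --> d /\ forall k, S (x + t k *: dk k)].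

Definition tcone2 (S : set V) (x d : V) : set V :=
  [set w | exists (t : nat -> R) (wk : nat -> V),
     down0 t /\ wk @ \oo --> w /\
     forall k, S (x + t k *: d + (2^-1 * t k ^+ 2) *: wk k)].

Definition tcone2asym (S : set V) (x d : V) : set V :=
  [set w | exists (t r : nat -> R) (wk : nat -> V),
     down0 t /\ down0 r /\ (fun k => t k / r k) @ \oo --> 0 /\
     wk @ \oo --> w /\
     forall k, S (x + t k *: d + (2^-1 * t k * r k) *: wk k)].

Definition dclarke (S : set V) (x d : V) : set V :=
  [set v | forall (t : nat -> R) (dk : nat -> V),
     down0 t -> dk @ \oo --> d -> (forall k, S (x + t k *: dk k)) ->
     exists vk : nat -> V, vk @ \oo --> v /\
       \forall k \near \oo, tcone S (x + t k *: dk k) (vk k)].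
End Cones.

From HB Require Import structures.
From mathcomp Require Import all_boot all_order all_algebra.
From mathcomp Require Import all_classical all_reals all_analysis.
From mathcomp Require Import lra.
Import Order.TTheory GRing.Theory Num.Theory.
Import numFieldNormedType.Exports.
Local Open Scope classical_set_scope.
Local Open Scope ring_scope.

(* Since 0 is a directional Clarke vector, it suffices to show that w + v is
   second-order tangent whenever w is and v is directional Clarke.  The points
   x + t_k d + h_k w_k of S witnessing w (with h_k = o(t_k)) are of the form
   x + t_k d'_k with d'_k -> d, and near such base points y = x + t d' every
   tangent cone contains a vector e-close to v, uniformly.  Hence
   dist(y + s v, S) <= 2 e s for all s <= h: the set of such s is closed, and
   from the nearest point of S to y + s v a tangent vector close to v pushes it
   a little further.  So y + h (v + c_h) lies in S with c_h = o(1), and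
   w_k + v + c_k witnesses w + v. *)

Lemma sup_induction (R : realType) (P : R -> Prop) (h : R) :
  0 <= h -> P 0 ->
  (forall s, 0 <= s <= h ->
     (forall eta, 0 < eta -> exists2 s', P s' & s - eta < s' <= s) -> P s) ->
  (forall s, 0 <= s < h -> P s -> exists2 s', P s' & s < s' <= h) ->
  P h.
Proof.
move=> h0 P0 P_closed P_step.
pose A := [set s | 0 <= s <= h /\ P s].
have A0 : A 0 by split; rewrite ?lexx.
have A_ub : ubound A h by move=> s [/andP[]].
have hsA : has_sup A by split; [exists 0 | exists h].
set M := sup A.
have M0 : 0 <= M by exact: sup_upper_bound.
have Mh : M <= h by apply: ge_sup => //; exists 0.
have PM : P M.
  apply: P_closed => [|eta eta0]; first by rewrite M0.
  have [s As Ms] := sup_adherent eta0 hsA.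
  by exists s; [case: As | rewrite Ms sup_upper_bound].
have [Mlt|hM] := ltP M h; last by have -> : h = M by apply/le_anti; rewrite Mh hM.
have [|s' Ps' /andP[Ms' s'h]] := P_step M _ PM; first by rewrite M0 Mlt.
have As' : A s' by split => //; rewrite s'h andbT (le_trans M0) ?ltW.
by have := sup_upper_bound hsA As'; rewrite -/M; lra.
Qed.

Lemma down0_le_inv (R : realType) (t : nat -> R) :
  (forall k, 0 < t k <= k.+1%:R^-1) -> down0 t.
Proof.
move=> t_bnd; split=> [k|]; first by case/andP: (t_bnd k).
apply/cvgrPdist_lt => e e0.
apply: filterS (near_infty_natSinv_lt (PosNum e0)) => k /= ke.
have /andP[tk0 tk_le] := t_bnd k.
by rewrite sub0r normrN gtr0_norm // (le_lt_trans tk_le).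
Qed.

Lemma down0_inv (R : realType) : down0 (fun k : nat => (k.+1%:R^-1 : R)).
Proof. by apply: down0_le_inv => k; rewrite invr_gt0 ltr0Sn lexx. Qed.

Section TangentCones.
Context {R : realType} {n : nat} {S : set 'rV[R]_n}.

Lemma tcone0 (y : 'rV[R]_n) : S y -> tcone S y 0.
Proof.
move=> Sy; exists (fun k => k.+1%:R^-1), (fun=> 0).
by split; [exact: down0_inv | split=> [|k]; [exact: cvg_cst | rewrite scaler0 addr0]].
Qed.

Lemma dclarke0 (x d : 'rV[R]_n) : dclarke S x d 0.
Proof.
move=> t dk _ _ S_dk; exists (fun=> 0); split; first exact: cvg_cst.
by apply: nearW => k; exact: tcone0.
Qed.

Lemma tcone_approx (p u v : 'rV[R]_n) (e delta : R) :
  tcone S p u -> `|u - v| < e -> 0 < delta ->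
  exists2 s, 0 < s < delta & exists2 q, S q & `|p + s *: v - q| <= e * s.
Proof.
move=> [sg [uj [[sg0 sg_cvg] [uj_cvg S_uj]]]] uv delta0.
have sg_small : \forall j \near \oo, `|0 - sg j| < delta.
  by move/cvgrPdist_lt: sg_cvg; apply.
have uj_close : \forall j \near \oo, `|u - uj j| < e - `|u - v|.
  by move/cvgrPdist_lt: uj_cvg; apply; rewrite subr_gt0.
have [j [sgj ujj]] := filter_ex (filterI sg_small uj_close).
move: sgj; rewrite sub0r normrN gtr0_norm // => sgj.
exists (sg j); first by rewrite sg0 sgj.
exists (p + sg j *: uj j) => //.
have -> : p + sg j *: v - (p + sg j *: uj j) = sg j *: (v - uj j).
  by rewrite scalerBr opprD addrACA subrr add0r.
rewrite normrZ gtr0_norm // mulrC ler_pM2r //.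
have -> : v - uj j = (v - u) + (u - uj j) by rewrite addrA subrK.
by apply: le_trans (ler_normD _ _) _; rewrite (distrC v u); lra.
Qed.

Lemma dclarke_uniform (x d v : 'rV[R]_n) (e : R) :
  dclarke S x d v -> 0 < e -> exists2 del, 0 < del &
  forall t d', 0 < t -> t < del -> `|d' - d| < del -> S (x + t *: d') ->
  exists2 u, tcone S (x + t *: d') u & `|u - v| < e.
Proof.
move=> Cv e0; apply: contrapT => no_del.
have bad k : exists p : R * 'rV[R]_n, [/\ 0 < p.1 <= k.+1%:R^-1,
    `|p.2 - d| < k.+1%:R^-1, S (x + p.1 *: p.2) &
    forall u, tcone S (x + p.1 *: p.2) u -> e <= `|u - v|].
  apply: contrapT => no_p; apply: no_del; exists k.+1%:R^-1; first by rewrite invr_gt0.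
  move=> t d' t0 tk dk Sy; apply: contrapT => no_u; apply: no_p; exists (t, d').
  split=> //=; first by rewrite t0 ltW.
  by move=> u Tu; rewrite leNgt; apply/negP => uv; apply: no_u; exists u.
have [f f_bad] := choice bad.
have t_down : down0 (fun k => (f k).1).
  by apply: down0_le_inv => k; have [] := f_bad k.
have d_cvg : (fun k => (f k).2) @ \oo --> d.
  apply/cvgrPdistC_lt => eps eps0.
  apply: filterS (near_infty_natSinv_lt (PosNum eps0)) => k /= ke.
  by have [_ /lt_trans dk _ _] := f_bad k; apply: dk.
have S_f k : S (x + (f k).1 *: (f k).2) by have [] := f_bad k.
have [vk [vk_cvg T_vk]] := Cv _ _ t_down d_cvg S_f.
have vk_close : \forall k \near \oo, `|vk k - v| < e.
  by move/cvgrPdistC_lt: vk_cvg; apply.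
have [k [vkk Tk]] := filter_ex (filterI vk_close T_vk).
have [_ _ _ far] := f_bad k.
by have := far _ Tk; rewrite leNgt vkk.
Qed.

End TangentCones.

Lemma closed_nearest_point {R : realType} {n : nat} {S : set 'rV[R]_n} {q : 'rV[R]_n} :
  closed S -> S q ->
  forall z, exists2 p, S p & forall p', S p' -> `|z - p| <= `|z - p'|.
Proof.
move=> cS Sq z; pose r := `|z - q| + 1.
have r0 : 0 < r by rewrite /r ltr_wpDl.
pose A := S `&` closed_ball z r.
have A0 : A !=set0.
  by exists q; split => //; rewrite closed_ballE //= /closed_ball_ /= /r lerDl ler01.
have cA : compact A.
  apply: bounded_closed_compact; last by apply: closedI => //; exact: closed_ball_closed.
  exists (`|z| + r); split; first by rewrite realE addr_ge0 // ltW.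
  move=> M HM p [_]; rewrite closed_ballE //= => zp.
  apply: le_trans (ltW HM).
  have -> : p = z - (z - p) by rewrite opprB addrC subrK.
  by apply: (le_trans (ler_normB _ _)); rewrite lerD2l.
have dist_cont : {within A, continuous (fun p => `|z - p|)}.
  apply: continuous_subspaceT => p.
  apply: continuous_comp; last exact: norm_continuous.
  exact: (@continuousB _ _ _ (fun=> z) id p (@cst_continuous _ _ z p) cvg_id).
have [c] := EVT_min_rV A0 cA dist_cont.
rewrite inE => -[Sc zc] c_min; exists c => // p' Sp'.
have [zp'|zp'] := leP `|z - p'| r.
  by apply: c_min; rewrite inE; split => //; rewrite closed_ballE.
by apply/ltW/(le_lt_trans _ zp'); move: zc; rewrite closed_ballE.
Qed.

Section MetricProjection.
Context {R : realType} {n : nat} {S : set 'rV[R]_n} {pr : 'rV[R]_n -> 'rV[R]_n}.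
Hypothesis pr_in : forall z, S (pr z).
Hypothesis pr_min : forall z q, S q -> `|z - pr z| <= `|z - q|.

Lemma dist_pr_le (z z' : 'rV[R]_n) : `|z - pr z| <= `|z - z'| + `|z' - pr z'|.
Proof.
apply: le_trans (pr_min z _ (pr_in z')) _.
have -> : z - pr z' = (z - z') + (z' - pr z') by rewrite addrA subrK.
exact: ler_normD.
Qed.

Section Ray.
Context {x d v : 'rV[R]_n} {e del : R}.
Hypothesis e_gt0 : 0 < e.
Hypothesis v_uniform : forall t d', 0 < t -> t < del -> `|d' - d| < del ->
  S (x + t *: d') -> exists2 u, tcone S (x + t *: d') u & `|u - v| < e.
Context {t h : R} {d' : 'rV[R]_n}.
Hypotheses (t_gt0 : 0 < t) (t_lt : t < del) (h_gt0 : 0 < h).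
Hypothesis d'_close : `|d' - d| + h / t * (`|v| + 2 * e) < del.
Hypothesis S_base : S (x + t *: d').

Let y := x + t *: d'.
Let D s := `|y + s *: v - pr (y + s *: v)|.

Lemma ray_dist_step (s : R) : 0 <= s < h -> D s <= 2 * e * s ->
  exists2 s', D s' <= 2 * e * s' & s < s' <= h.
Proof.
move=> /andP[s0 sh] Ds; set z := y + s *: v; set p := pr z.
pose d'' := t^-1 *: (p - x).
have p_eq : p = x + t *: d''.
  by rewrite /d'' scalerA mulfV ?gt_eqF // scale1r addrC subrK.
have py : `|p - y| <= h * (`|v| + 2 * e).
  have -> : p - y = (p - z) + s *: v.
    by rewrite /z !opprD !addrA subrK.
  apply: le_trans (ler_normD _ _) _; rewrite normrZ ger0_norm // distrC.
  move: Ds; rewrite /D -/z -/p => Ds.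
  have : s * `|v| <= h * `|v| by rewrite ler_wpM2r // ltW.
  have : 2 * e * s <= 2 * e * h by rewrite ler_wpM2l ?mulr_ge0 ?ltW.
  lra.
have d''_close : `|d'' - d| < del.
  have -> : d'' - d = (d' - d) + t^-1 *: (p - y).
    by rewrite /y opprD addrA scalerBr scalerA mulVf ?gt_eqF // scale1r
      [RHS]addrC [RHS]addrA subrK.
  apply: le_lt_trans (ler_normD _ _) (le_lt_trans _ d'_close).
  rewrite lerD2l normrZ ger0_norm ?invr_ge0 ?(ltW t_gt0) //.
  by rewrite mulrC mulrAC ler_pM2r ?invr_gt0.
have [u Tu uv] := v_uniform _ _ t_gt0 t_lt d''_close (eq_ind _ S (pr_in z) _ p_eq).
rewrite -p_eq in Tu.
have hs0 : 0 < h - s by rewrite subr_gt0.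
have [sg /andP[sg0 sg_lt] [q Sq pq]] := tcone_approx p u v e (h - s) Tu uv hs0.
exists (s + sg); last by rewrite ltrDl sg0 -lerBrDl ltW.
apply: le_trans (pr_min _ _ Sq) _.
have -> : y + (s + sg) *: v - q = (z - p) + (p + sg *: v - q).
  by rewrite /z scalerDl !addrA addrNK.
apply: le_trans (ler_normD _ _) _.
move: Ds; rewrite /D -/z -/p mulrDr.
by have := mulr_ge0 (ltW e_gt0) (ltW sg0); lra.
Qed.

Lemma ray_dist_le : `|y + h *: v - pr (y + h *: v)| <= 2 * e * h.
Proof.
apply: (@sup_induction _ (fun s => D s <= 2 * e * s)) => [||s _ approx|].
- exact: ltW.
- rewrite /D scale0r addr0 mulr0; apply: le_trans (pr_min _ _ S_base) _.
  by rewrite subrr normr0.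
- apply/ler_addgt0Pr => eps eps0.
  have eta0 : 0 < eps / (`|v| + 1) by rewrite divr_gt0 // ltr_wpDl.
  have [s' Ds' /andP[ss' s's]] := approx _ eta0.
  apply: le_trans (dist_pr_le _ (y + s' *: v)) _.
  have -> : y + s *: v - (y + s' *: v) = (s - s') *: v.
    by rewrite scalerBl opprD addrACA subrr add0r.
  rewrite normrZ ger0_norm ?subr_ge0 //.
  have : (s - s') * (`|v| + 1) <= eps.
    by rewrite -ler_pdivlMr ?ltr_wpDl //; lra.
  have : 2 * e * s' <= 2 * e * s by rewrite ler_wpM2l ?mulr_ge0 ?(ltW e_gt0).
  rewrite -/(D s') mulrDr mulr1; have : 0 <= s - s' by rewrite subr_ge0.
  by nra.
- exact: ray_dist_step.
Qed.

End Ray.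
End MetricProjection.

Section SecondOrder.
Context {R : realType} {n : nat} {S : set 'rV[R]_n}.
Hypothesis S_closed : closed S.
Context {x d v : 'rV[R]_n}.
Hypothesis v_clarke : dclarke S x d v.

Lemma dclarke_corrector (t h : nat -> R) (d' : nat -> 'rV[R]_n) :
  down0 t -> d' @ \oo --> d -> (forall k, S (x + t k *: d' k)) ->
  (forall k, 0 < h k) -> (fun k => h k / t k) @ \oo --> 0 ->
  exists2 c : nat -> 'rV[R]_n, c @ \oo --> (0 : 'rV[R]_n) &
    forall k, S (x + t k *: d' k + h k *: (v + c k)).
Proof.
move=> [t_gt0 t_cvg] d'_cvg S_base h_gt0 ht_cvg.
have nearest z : exists p, S p /\ forall q, S q -> `|z - p| <= `|z - q|.
  by have [p ? ?] := closed_nearest_point S_closed (S_base 0) z; exists p.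
have [pr pr_spec] := choice nearest.
have pr_in z : S (pr z) by case: (pr_spec z).
have pr_min z q : S q -> `|z - pr z| <= `|z - q| by case: (pr_spec z) => _; apply.
pose y k := x + t k *: d' k.
exists (fun k => (h k)^-1 *: (pr (y k + h k *: v) - (y k + h k *: v))); last first.
  move=> k; rewrite -/(y k) scalerDr addrA scalerA mulfV ?gt_eqF // scale1r.
  by rewrite addrC subrK.
apply/cvgrPdist_lt => eps eps0.
have e0 : 0 < eps / 4 by rewrite divr_gt0.
have [del del0 v_uniform] := dclarke_uniform x d v (eps / 4) v_clarke e0.
pose c := `|v| + 2 * (eps / 4).
have c0 : 0 < c by rewrite /c ltr_wpDl // mulr_gt0.
have t_small : \forall k \near \oo, `|0 - t k| < del by move/cvgrPdist_lt: t_cvg; apply.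
have d'_near : \forall k \near \oo, `|d - d' k| < del / 2.
  by move/cvgrPdist_lt: d'_cvg; apply; rewrite divr_gt0.
have ht_small : \forall k \near \oo, `|0 - h k / t k| < del / 2 / c.
  by move/cvgrPdist_lt: ht_cvg; apply; rewrite !divr_gt0.
apply: filterS (filterI t_small (filterI d'_near ht_small)) => k [tk [dk htk]].
move: tk htk; rewrite !sub0r !normrN !gtr0_norm ?divr_gt0 // => tk htk.
have close : `|d' k - d| + h k / t k * c < del.
  by rewrite ltr_pdivlMr // in htk; rewrite distrC; lra.
have := ray_dist_le pr_in pr_min e0 v_uniform (t_gt0 k) tk (h_gt0 k) close (S_base k).
rewrite -/(y k) distrC normrZ gtr0_norm ?invr_gt0 // distrC => ray.
rewrite -(ltr_pM2l (h_gt0 k)) mulrA mulfV ?gt_eqF // mul1r.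
by apply: le_lt_trans ray _; have := h_gt0 k; nra.
Qed.

Lemma dclarke_shift (t s : nat -> R) (w : nat -> 'rV[R]_n) (w0 : 'rV[R]_n) :
  down0 t -> (forall k, 0 < s k) -> s @ \oo --> 0 -> w @ \oo --> w0 ->
  (forall k, S (x + t k *: d + (t k * s k) *: w k)) ->
  exists2 w' : nat -> 'rV[R]_n, w' @ \oo --> w0 + v &
    forall k, S (x + t k *: d + (t k * s k) *: w' k).
Proof.
move=> t_down s_gt0 s_cvg w_cvg S_w; have [t_gt0 _] := t_down.
pose d' k := d + s k *: w k.
have d'_cvg : d' @ \oo --> d.
  rewrite -[X in _ --> X]addr0 -(scale0r w0); apply: cvgD; first exact: cvg_cst.
  exact: cvgZ.
have d'_eq k : x + t k *: d' k = x + t k *: d + (t k * s k) *: w k.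
  by rewrite /d' scalerDr scalerA addrA.
have S_base k : S (x + t k *: d' k) by rewrite d'_eq.
have ts_gt0 k : 0 < t k * s k by rewrite mulr_gt0.
have ts_cvg : (fun k => t k * s k / t k) @ \oo --> 0.
  by apply: cvg_trans s_cvg; apply: near_eq_cvg; apply: nearW => k;
    rewrite mulrC mulKf ?gt_eqF.
have [c c_cvg S_c] := dclarke_corrector _ _ _ t_down d'_cvg S_base ts_gt0 ts_cvg.
exists (fun k => w k + v + c k).
  by rewrite -[X in _ --> X]addr0; apply: cvgD => //; apply: cvgD => //; exact: cvg_cst.
by move=> k; have := S_c k; rewrite d'_eq -addrA -scalerDr addrA.
Qed.

Lemma tcone2D_dclarke (w : 'rV[R]_n) : tcone2 S x d w -> tcone2 S x d (w + v).
Proof.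
move=> [t [wk [t_down [wk_cvg S_wk]]]]; have [t_gt0 t_cvg] := t_down.
have half_sq k : 2^-1 * t k ^+ 2 = t k * (2^-1 * t k) by rewrite expr2 mulrCA.
have s_gt0 k : 0 < 2^-1 * t k by rewrite mulr_gt0 ?invr_gt0.
have s_cvg : (fun k => 2^-1 * t k) @ \oo --> 0.
  by rewrite -(mulr0 2^-1); apply: cvgM => //; exact: cvg_cst.
have S_w k : S (x + t k *: d + (t k * (2^-1 * t k)) *: wk k) by rewrite -half_sq.
have [w' w'_cvg S_w'] := dclarke_shift _ _ _ _ t_down s_gt0 s_cvg wk_cvg S_w.
by exists t, w'; do 2 split=> //; move=> k; rewrite half_sq.
Qed.

Lemma tcone2asymD_dclarke (w : 'rV[R]_n) :
  tcone2asym S x d w -> tcone2asym S x d (w + v).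
Proof.
move=> [t [r [wk [t_down [[r_gt0 r_cvg] [tr_cvg [wk_cvg S_wk]]]]]]].
have half_tr k : 2^-1 * t k * r k = t k * (2^-1 * r k) by rewrite mulrCA mulrA.
have s_gt0 k : 0 < 2^-1 * r k by rewrite mulr_gt0 ?invr_gt0.
have s_cvg : (fun k => 2^-1 * r k) @ \oo --> 0.
  by rewrite -(mulr0 2^-1); apply: cvgM => //; exact: cvg_cst.
have S_w k : S (x + t k *: d + (t k * (2^-1 * r k)) *: wk k) by rewrite -half_tr.
have [w' w'_cvg S_w'] := dclarke_shift _ _ _ _ t_down s_gt0 s_cvg wk_cvg S_w.
by exists t, r, w'; do 4 split=> //; move=> k; rewrite half_tr.
Qed.

End SecondOrder.

Lemma setsum_mk_absorb {R : realType} {n : nat} (A B : set 'rV[R]_n) :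
  B 0 -> (forall a b, A a -> B b -> A (a + b)) -> setsum_mk A B = A.
Proof.
move=> B0 AB; apply/seteqP; split=> [_ [a [b [Aa [Bb ->]]]] | a Aa]; first exact: AB.
by exists a, 0; rewrite addr0.
Qed.

Theorem proposition2p3 (R : realType) (n : nat) (S : set 'rV[R]_n)
    (x d : 'rV[R]_n) :
  closed S -> S x -> tcone S x d ->
  setsum_mk (tcone2 S x d) (dclarke S x d) = tcone2 S x d /\
  setsum_mk (tcone2asym S x d) (dclarke S x d) = tcone2asym S x d.
Proof.
move=> S_closed _ _.
split; apply: setsum_mk_absorb; try exact: dclarke0.
- by move=> w v Tw Cv; apply: (tcone2D_dclarke S_closed Cv).
- by move=> w v Tw Cv; apply: (tcone2asymD_dclarke S_closed Cv).
Qed.
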